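(* Let $r\geq 2$ and let $E$ be the set of idempotents of the free inverse monoid $\mathrm{FIM}_r$ of rank $r$. Then the exponential growth rate of the idempotents is \[\limsup_{K\to\infty}|S(K)\cap E|^{1/K}=\lim_{k\to\infty}|S(2k)\cap E|^{1/(2k)}=\left(\frac{2r-1}{2r-2}\right)^{r-1}\sqrt{2r-1}.\] Moreover, the ratio of this growth rate to $\sqrt{e(2r-1)}$ tends to $1$ as $r\to\infty$.
   Context: $\mathrm{FIM}_r$ is the free inverse monoid on a set $X$ with $|X|=r$. It is generated as a monoid by $X\cup X^{-1}$, where $X^{-1}$ is a disjoint copy of $X$ consisting of formal inverses. The length of an element is the minimal length of a word over $X\cup X^{-1}$ representing it. $S(K)$ is the set of elements of length exactly $K$. An idempotent is an element $e$ with $e^2=e$. In Munn's model these are exactly the pairs $(T,1)$, and $S(K)\cap E$ is empty when $K$ is odd. *)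

From HB Require Import structures.
From mathcomp Require Import all_boot all_order all_algebra.
From mathcomp Require Import all_classical all_reals all_analysis.
Set Implicit Arguments. Unset Strict Implicit. Unset Printing Implicit Defensive.

(** Free inverse monoid FIM_r, presented through Munn's model.
    Alphabet X ∪ X^{-1}: a letter is (i, b) with i : 'I_r, b = false for x_i,
    b = true for the formal inverse x_i^{-1}. *)
Definition letter (r : nat) : finType := ('I_r * bool)%type.
Definition word (r : nat) := seq (letter r).

Definition linv r (a : letter r) : letter r := (a.1, ~~ a.2).

(** Free reduction (stack based; the reduced word is stored reversed,
    which is a canonical representative of the free-group element). *)
Fixpoint redacc r (acc : word r) (w : word r) : word r :=
  match w with
  | [::] => acc
  | a :: w' =>
      redacc (match acc with
              | b :: acc' => if b == linv a then acc' else a :: acc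
              | [::] => [:: a]
              end) w'
  end.
Definition red r (w : word r) : word r := redacc [::] w.

(** Vertex set of the Munn tree of w: the free-group elements (vertices of
    the Cayley tree of F_r) visited by the prefixes of w.  A connected
    subgraph of a tree is determined by its vertex set. *)
Definition verts r (w : word r) : seq (word r) :=
  [seq red (take n w) | n <- iota 0 (size w).+1].

(** Two words represent the same element of FIM_r iff they have the same
    Munn pair (T, g): same Munn tree and same reduced form. *)
Definition sameM r (u v : word r) : bool :=
  [&& red u == red v, all (mem (verts v)) (verts u) & all (mem (verts u)) (verts v)].

Lemma sameM_refl r (w : word r) : sameM w w.
Proof.
by apply/and3P; split => //; apply/allP.
Qed.

Definition idemw r (w : word r) : bool := sameM (w ++ w) w.

Definition reprP r (w : word r) : pred nat :=
  fun n => [exists t : n.-tuple (letter r), sameM (tval t) w].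

Lemma reprP_ex r (w : word r) : exists n, reprP w n.
Proof.
exists (size w); apply/existsP; exists (in_tuple w); exact: sameM_refl.
Qed.

Definition elen r (w : word r) : nat := ex_minn (reprP_ex w).

Fixpoint classes r (l : seq (word r)) : seq (word r) :=
  match l with
  | [::] => [::]
  | w :: l' => let c := classes l' in if has (sameM w) c then c else w :: c
  end.

(** |S(K) ∩ E| : number of idempotent elements of FIM_r of length exactly K.
    Every element of length K is represented by a word of length K, so these
    elements are the classes of words t of size K that are idempotent and
    whose element has length K. *)
Definition SE (r K : nat) : nat :=
  size (classes
    [seq tval t | t <- enum [pred t : K.-tuple (letter r) |
                                idemw (tval t) && (elen (tval t) == K)]]).

(* An idempotent of FIM_r is a Munn pair (T, 1) with T a finite subtree of
   the Cayley tree of F_r containing the root, and its length is 2 (|T| - 1),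
   a shortest representative being a depth-first traversal of T.  Generating
   these traversals with a stack of pending edges identifies |S(2k) ∩ E| with
   the Raney number s/(s + mk) C(s + mk, k), where s = 2r and m = 2r - 1;
   comparing it with the largest term of the binomial expansion of
   m^(mk) = ((m - 1) + 1)^(mk) shows that its k-th root tends to
   m^m / (m - 1)^(m - 1), the square of the claimed rate.  Odd lengths do not
   occur, and the ratio to sqrt (e (2r - 1)) is ((1 + 1/n)^n / e)^(1/2) with
   n = 2r - 2. *)

From HB Require Import structures.
From mathcomp Require Import all_boot all_order all_algebra.
From mathcomp Require Import all_classical all_reals all_analysis.
From mathcomp Require Import zify ring lra.
Set Implicit Arguments. Unset Strict Implicit. Unset Printing Implicit Defensive.
Import Order.TTheory GRing.Theory Num.Theory numFieldNormedType.Exports.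

Section SeqFacts.
Variable T : eqType.
Implicit Types (x : T) (s t : seq T).

Lemma eq_mem_cons x s t : x :: s =i x :: t -> (x \in s) = (x \in t) -> s =i t.
Proof. by move=> E Hx z; have := E z; rewrite !inE; case: eqP => [-> _ | _]. Qed.

Lemma suffix_consr s t x : suffix s (x :: t) = (s == x :: t) || suffix s t.
Proof.
apply/idP/idP => [/suffixP[[|y s2] /= e]|]; first by rewrite e eqxx.
  by case: e => _ ->; rewrite suffix_suffix orbT.
by case/orP => [/eqP -> | /suffix_trans]; [exact: suffix_refl | apply; exact: suffix_cons].
Qed.

Lemma nsuffix_long s t : size t < size s -> ~~ suffix s t.
Proof. by move=> H; apply/negP => /size_suffix; rewrite leqNgt H. Qed.

Lemma suffix_size_eq s t : suffix s t -> size t <= size s -> s = t.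
Proof. by move=> /suffixP[[|x s2] ->] //=; rewrite size_cat; lia. Qed.

Lemma suffix_child s t : suffix s t -> t != s -> exists x, suffix (x :: s) t.
Proof.
move=> /suffixP[s2 ->]; case/lastP: s2 => [|s2 x]; first by rewrite eqxx.
by exists x; rewrite cat_rcons suffix_suffix.
Qed.

Lemma suffix_behead s t : suffix s t -> t != s -> suffix s (behead t).
Proof.
by move=> /suffixP[[|x s2] ->] //=; rewrite ?eqxx // => _; apply: suffix_suffix.
Qed.

End SeqFacts.

Section Transversal.
Variables (T : eqType) (e : rel T).
Hypotheses (e_sym : symmetric e) (e_trans : transitive e).

Lemma size_transversal_le (A B : seq T) :
  uniq A -> {in A &, forall a b, e a b -> a = b} -> {in A, forall a, has (e a) B} ->
  size A <= size B.
Proof.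
move=> UA eA AB; pose f a := nth a B (find (e a) B).
have fP a : a \in A -> f a \in B /\ e a (f a).
  by move=> /AB Ha; split; [apply: mem_nth; rewrite -has_find | apply: nth_find].
rewrite -(size_map f); apply: uniq_leq_size => [|_ /mapP[a /fP[? _] ->] //].
rewrite map_inj_in_uniq // => a1 a2 H1 H2 E; apply: eA => //.
by have [_ e1] := fP _ H1; have [_ e2] := fP _ H2; rewrite (e_trans e1) // E e_sym.
Qed.

End Transversal.

(** * Free reduction and Munn trees *)

Section FreeReduction.
Variable r : nat.
Local Notation L := (letter r).
Local Notation W := (word r).

Lemma linvK : involutive (@linv r).
Proof. by case=> i b; rewrite /linv /= negbK. Qed.

Definition red_step (p : W) (a : L) : W :=
  if p is b :: p' then (if b == linv a then p' else a :: p) else [:: a].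

Lemma redacc_cons (p : W) a w : redacc p (a :: w) = redacc (red_step p a) w.
Proof. by []. Qed.

Lemma redacc_cat (p u v : W) : redacc p (u ++ v) = redacc (redacc p u) v.
Proof. by elim: u p => //= a u IH p; rewrite IH. Qed.

Lemma red_cat (u v : W) : red (u ++ v) = redacc (red u) v.
Proof. exact: redacc_cat. Qed.

Definition adjoinable (p : W) (a : L) : bool :=
  if p is b :: _ then b != linv a else true.

Fixpoint reduced (w : W) : bool :=
  if w is a :: p then adjoinable p a && reduced p else true.

Lemma red_stepE p a : red_step p a = if adjoinable p a then a :: p else behead p.
Proof. by case: p => //= b p; case: (b == linv a). Qed.

Lemma red_step_adjoinable p a : adjoinable p a -> red_step p a = a :: p.
Proof. by rewrite red_stepE => ->. Qed.

Lemma red_step_linv p a : red_step (a :: p) (linv a) = p.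
Proof. by rewrite /= linvK eqxx. Qed.

Lemma reduced_red_step p a : reduced p -> reduced (red_step p a).
Proof.
by rewrite red_stepE; case: ifP => /= [-> -> //|_]; case: p => //= b p /andP[].
Qed.

Lemma reduced_redacc p w : reduced p -> reduced (redacc p w).
Proof. by elim: w p => //= a w IH p rp; apply/IH/reduced_red_step. Qed.

Lemma reduced_red (w : W) : reduced (red w).
Proof. exact: reduced_redacc. Qed.

Lemma red_stepK p a : reduced p -> red_step (red_step p a) (linv a) = p.
Proof.
rewrite (red_stepE p a); case: ifP => [_ _|]; first exact: red_step_linv.
case: p => //= b p /negbFE/eqP -> /andP[Ha _].
by rewrite red_stepE; case: p Ha => //= c p ->.
Qed.

Definition winv (w : W) : W := rev (map (@linv r) w).

Lemma redaccK p w : reduced p -> redacc (redacc p w) (winv w) = p.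
Proof.
elim: w p => //= a w IH p rp.
rewrite /winv map_cons rev_cons -cats1 redacc_cat -/(winv w) IH ?reduced_red_step //.
exact: red_stepK.
Qed.

Lemma redacc_inj (p q w : W) :
  reduced p -> reduced q -> redacc p w = redacc q w -> p = q.
Proof. by move=> rp rq e; rewrite -(redaccK w rp) -(redaccK w rq) e. Qed.

End FreeReduction.

Section MunnTree.
Variable r : nat.
Local Notation L := (letter r).
Local Notation W := (word r).

Fixpoint walk (p : W) (w : W) : seq W :=
  if w is a :: w' then p :: walk (red_step p a) w' else [:: p].

Lemma walkE p (w : W) :
  [seq redacc p (take n w) | n <- iota 0 (size w).+1] = walk p w.
Proof.
elim: w p => [|a w IH] p //.
by rewrite /= -add1n iotaDl -map_comp -IH.
Qed.

Lemma vertsE (w : W) : verts w = walk [::] w.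
Proof. exact: walkE. Qed.

Lemma walk_cons p a (w : W) : walk p (a :: w) = p :: walk (red_step p a) w.
Proof. by []. Qed.

Lemma mem_walk_head p (w : W) : p \in walk p w.
Proof. by case: w => *; apply: mem_head. Qed.

Lemma mem_verts_nil (w : W) : [::] \in verts w.
Proof. by rewrite vertsE mem_walk_head. Qed.

Lemma walk_rcons p (w : W) a :
  walk p (rcons w a) = rcons (walk p w) (redacc p (rcons w a)).
Proof. by elim: w p => //= b w IH p; rewrite IH. Qed.

Lemma mem_walk_last p (w : W) : redacc p w \in walk p w.
Proof. by elim: w p => [|a w IH] p /=; rewrite ?mem_head // inE IH orbT. Qed.

Lemma walk_cat p (u v : W) :
  walk p (u ++ v) = walk p u ++ behead (walk (redacc p u) v).
Proof. by elim: u p => [|a u IH] p /=; [case: v | rewrite IH]. Qed.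

Lemma walk_parent p (w : W) x :
  x \in walk p w -> (behead x \in walk p w) || suffix x p.
Proof.
elim: w p => [|a w IH] p /=; first by rewrite inE => /eqP ->; rewrite suffix_refl orbT.
rewrite inE => /orP[/eqP -> | /IH/orP[H | ]]; first by rewrite suffix_refl orbT.
  by rewrite inE H orbT.
rewrite red_stepE; case: ifP => _.
  by rewrite suffix_consr => /orP[/eqP -> | ->]; rewrite /= ?inE ?eqxx ?orbT.
move=> H; rewrite (suffix_trans H) ?orbT //; case: (p) => //= *; exact: suffix_cons.
Qed.

Lemma walk_nil_parent (w : W) x : x \in walk [::] w -> behead x \in walk [::] w.
Proof.
by move=> /walk_parent /orP[// | ]; rewrite suffixs0 => /eqP ->; apply: mem_walk_head.
Qed.

Lemma reduced_walk p (w : W) x : reduced p -> x \in walk p w -> reduced x.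
Proof.
elim: w p => [|a w IH] p rp /=; first by rewrite inE => /eqP ->.
by rewrite inE => /orP[/eqP -> // | ]; apply/IH/reduced_red_step.
Qed.

Definition nverts (w : W) : nat := size (undup (verts w)).

Lemma nverts_gt0 (w : W) : 0 < nverts w.
Proof.
by rewrite /nverts -has_predT; apply/hasP; exists [::]; rewrite ?mem_undup ?mem_verts_nil.
Qed.

Lemma size_undup_eq (s t : seq W) : s =i t -> size (undup s) = size (undup t).
Proof. by move=> e; apply/perm_size/perm_undup. Qed.

(* Each letter either backtracks towards the root or moves to a child; a
   letter reaching a new vertex must be a forward move, which the reduced
   word records: hence 2 (#vertices - 1) <= |w| + |red w|. *)
Lemma nverts_le (w : W) : (2 * nverts w <= size w + size (red w) + 2).
Proof.
rewrite /nverts vertsE; elim/last_ind: w => [|w a IH] //.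
have Ered : red (rcons w a) = red_step (red w) a by rewrite -cats1 red_cat.
rewrite walk_rcons -/(red (rcons w a)) Ered size_rcons.
set q := red w in IH *; set s := walk [::] w in IH *.
rewrite (size_undup_eq (t := red_step q a :: s)); last first.
  by move=> x; rewrite mem_rcons.
rewrite /=; case: ifPn => Hin.
  by rewrite red_stepE; case: ifP; case: (q) IH => //= *; lia.
have Hadj : adjoinable q a.
  apply: contraNT Hin => /negbTE Hna; rewrite red_stepE Hna.
  exact/walk_nil_parent/mem_walk_last.
by rewrite red_step_adjoinable //= in IH *; lia.
Qed.

End MunnTree.

Section MunnElements.
Variable r : nat.
Local Notation W := (word r).

Lemma sameMP (u v : W) : reflect (red u = red v /\ verts u =i verts v) (sameM u v).
Proof.
apply: (iffP and3P) => [[/eqP e /allP uv /allP vu] | [e E]].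
  by split=> // x; apply/idP/idP => [/uv | /vu].
by split; [rewrite e | apply/allP => x; rewrite E | apply/allP => x; rewrite -E].
Qed.

Lemma sameM_sym (u v : W) : sameM u v = sameM v u.
Proof. by apply/sameMP/sameMP => -[e E]; split=> // x; rewrite E. Qed.

Lemma sameM_trans : transitive (@sameM r).
Proof.
move=> v u w /sameMP[e1 E1] /sameMP[e2 E2].
by apply/sameMP; split=> [|x]; rewrite ?e1 ?E1.
Qed.

Lemma idemwE (w : W) : idemw w = (red w == [::]).
Proof.
apply/sameMP/eqP => [[] | e].
  by rewrite red_cat => e _; apply: (@redacc_inj r _ _ w (reduced_red w)).
split=> [|x]; first by rewrite red_cat e.
by rewrite !vertsE walk_cat -/(red w) e mem_cat orb_idr // => /mem_behead.
Qed.

End MunnElements.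

(** * Depth-first traversals of subtrees *)

(* Raney numbers: [raney m k s] counts the ways to choose [k] vertices of a
   forest grown from [s] free slots, each chosen vertex offering [m] new ones. *)
Fixpoint raney (m k s : nat) {struct k} : nat :=
  let fix go s :=
    match s with
    | 0 => nat_of_bool (k == 0)
    | s'.+1 => go s' + (if k is k'.+1 then raney m k' (s' + m) else 0)
    end in go s.

Lemma raney0 m k : raney m k 0 = (k == 0).
Proof. by case: k. Qed.

Lemma raneyS m k s :
  raney m k s.+1 = raney m k s + (if k is k'.+1 then raney m k' (s + m) else 0).
Proof. by case: k. Qed.

Lemma raney_k0 m s : raney m 0 s = 1.
Proof. by elim: s => [|s IH]; rewrite ?raney0 // raneyS IH. Qed.

Lemma raney_ballot m k s : 0 < m -> raney m k s * (s + m * k) = s * 'C(s + m * k, k).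
Proof.
case: m => [|m] // _; elim: k s => [|k IHk] s.
  by rewrite raney_k0 muln0 addn0 bin0 mul1n muln1.
elim: s => [|s IHs]; first by rewrite raney0 mul0n.
rewrite raneyS; set n := s + m.+1 * k.+1.
have -> : s.+1 + m.+1 * k.+1 = n.+1 by rewrite /n; lia.
have := IHk (s + m.+1); have -> : s + m.+1 + m.+1 * k = n by rewrite /n; lia.
have := mul_bin_left n k; have -> : n - k = s + m * k.+1 + 1 by rewrite /n; lia.
have n0 : 0 < n by rewrite /n; lia.
rewrite binS => H1 H2; apply/eqP; rewrite -(eqn_pmul2l n0); apply/eqP.
move: IHs H1 H2; rewrite /n; set F1 := raney _ _ s; set F2 := raney _ _ (s + _).
by set A := 'C(_, k); set B := 'C(_, k.+1); nia.
Qed.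

Section Traversals.
Variable r : nat.
Local Notation L := (letter r).
Local Notation W := (word r).

(* A pending task of a depth-first traversal of a finite subtree of the
   Cayley tree of F_r: [inl (c, v)] offers the edge from [v] to its child
   [c :: v], and [inr a] returns across the edge [a] towards the root. *)
Definition task := ((L * W) + L)%type.

Definition explores (t : task) : bool := if t is inl _ then true else false.

Definition children (v : W) : seq task :=
  [seq inl (c, v) | c <- enum L & adjoinable v c].

(* Carry out the tasks from the top of the stack, exploring exactly [k] of
   the offered edges; exploring [b] crosses it, offers the children of the
   new vertex, and schedules the return across [b]. *)
Fixpoint traversals (k : nat) (st : seq task) {struct k} : seq W :=
  let fix go st :=
    match st with
    | [::] => if k is 0 then [:: [::]] else [::]
    | inl (b, q) :: st' =>
        go st' ++ (if k is k'.+1 then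
                     map (cons b) (traversals k' (children (b :: q) ++ inr b :: st'))
                   else [::])
    | inr a :: st' => map (cons (linv a)) (go st')
    end in go st.

Lemma traversals_nil k : traversals k [::] = if k is 0 then [:: [::]] else [::].
Proof. by case: k. Qed.

Lemma traversals_explore k b q st :
  traversals k (inl (b, q) :: st) = traversals k st ++
    (if k is k'.+1 then map (cons b) (traversals k' (children (b :: q) ++ inr b :: st))
     else [::]).
Proof. by case: k. Qed.

Lemma traversals_return k a st :
  traversals k (inr a :: st) = map (cons (linv a)) (traversals k st).
Proof. by case: k. Qed.

Lemma traversals_ind (P : nat -> seq task -> W -> Prop) :
  P 0 [::] [::] ->
  (forall k b q st x, x \in traversals k st -> P k st x -> P k (inl (b, q) :: st) x) ->
  (forall k b q st y, y \in traversals k (children (b :: q) ++ inr b :: st) ->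
     P k (children (b :: q) ++ inr b :: st) y -> P k.+1 (inl (b, q) :: st) (b :: y)) ->
  (forall k a st y, y \in traversals k st -> P k st y -> P k (inr a :: st) (linv a :: y)) ->
  forall k st x, x \in traversals k st -> P k st x.
Proof.
move=> Pnil Pskip Pexplore Preturn; elim/ltn_ind => k IHk st.
elim: st => [|[[b q] | a] st IHst] x.
- by rewrite traversals_nil; case: k {IHk} => // /[1!inE] /eqP ->.
- rewrite traversals_explore mem_cat => /orP[Hx | ]; first exact/Pskip/IHst.
  by case: k IHk IHst => // k IHk _ /mapP[y Hy ->]; apply/Pexplore/IHk.
- by rewrite traversals_return => /mapP[y Hy ->]; apply/Preturn/IHst.
Qed.

Lemma card_letter : #|L| = (2 * r).
Proof. by rewrite card_prod card_ord card_bool mulnC. Qed.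

Lemma size_children a q : size (children (a :: q)) = (2 * r - 1).
Proof.
rewrite size_map size_filter /=.
have -> : count (fun c => a != linv c) (enum L) = count (predC (pred1 (linv a))) (enum L).
  by apply: eq_count => c /=; congr negb; apply/eqP/eqP => [-> | ->]; rewrite linvK.
have := count_predC (pred1 (linv a)) (enum L).
by rewrite count_uniq_mem ?enum_uniq // mem_enum -cardE card_letter /=; lia.
Qed.

Lemma count_children v : count explores (children v) = size (children v).
Proof. by apply/eqP; rewrite -all_count; apply/allP => /= t /mapP[c _ ->]. Qed.

Lemma count_explores_inl x st : count explores (inl x :: st) = (count explores st).+1.
Proof. by []. Qed.

Lemma count_explores_inr a st : count explores (inr a :: st) = count explores st.
Proof. by []. Qed.

Lemma size_traversals k st :
  size (traversals k st) = raney (2 * r - 1) k (count explores st).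
Proof.
elim: k st => [|k IHk] st; elim: st => [|[[b q] | a] st IHst] //.
- by rewrite traversals_explore cats0 IHst count_explores_inl raneyS addn0.
- by rewrite traversals_return size_map IHst.
- rewrite traversals_explore size_cat IHst size_map IHk count_cat count_children.
  by rewrite count_explores_inr size_children count_explores_inl raneyS [(2 * r - 1 + _)]addnC.
- by rewrite traversals_return size_map IHst.
Qed.

Definition frontier (st : seq task) : seq W :=
  pmap (fun t : task => if t is inl (c, v) then Some (c :: v) else None) st.

Lemma frontierP st w :
  reflect (exists c q, w = c :: q /\ inl (c, q) \in st) (w \in frontier st).
Proof.
apply: (iffP idP) => [|[c [q [-> Hin]]]].
  rewrite mem_pmap => /mapP[[[c q] | a] // Hin [->]]; by exists c, q.
by rewrite mem_pmap; apply/mapP; exists (inl (c, q)).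
Qed.

Lemma frontier_inl b q st : frontier (inl (b, q) :: st) = (b :: q) :: frontier st.
Proof. by []. Qed.

Lemma frontier_inr a st : frontier (inr a :: st) = frontier st.
Proof. by []. Qed.

Lemma frontier_cat s t : frontier (s ++ t) = frontier s ++ frontier t.
Proof. exact: pmap_cat. Qed.

Lemma frontier_childrenP v w :
  reflect (exists2 c, w = c :: v & adjoinable v c) (w \in frontier (children v)).
Proof.
apply: (iffP (frontierP _ _)) => [[c [q [-> /mapP[c' Hc [-> ->]]]]] | [c -> Hc]].
  by exists c'; rewrite // mem_filter in Hc; case/andP: Hc.
by exists c, v; split=> //; apply/mapP; exists c; rewrite // mem_filter Hc mem_enum.
Qed.

(* [wf_stack p st]: [p] is the current vertex, the explore tasks are edges
   out of the current path that are neither crossed nor offered twice, and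
   the return tasks retrace the current path up to the root. *)
Fixpoint wf_stack (p : W) (st : seq task) : bool :=
  match st with
  | [::] => p == [::]
  | inl (b, q) :: st' => [&& q == p, adjoinable p b, inl (b, q) \notin st' & wf_stack p st']
  | inr a :: st' =>
      [&& p == a :: behead p, inl (a, behead p) \notin st' & wf_stack (behead p) st']
  end.

Lemma wf_explored_suffix p st c q : wf_stack p st -> inl (c, q) \in st -> suffix q p.
Proof.
elim: st p => [|[[b q'] | a] st IH] p //=.
  case/and4P => /eqP -> _ _ V; rewrite inE => /orP[/eqP[_ ->] | ].
    exact: suffix_refl.
  exact: IH.
case/and3P => /eqP E _ V /(IH _ V) /suffix_trans; apply; rewrite E; exact: suffix_cons.
Qed.

Lemma wf_explored_not_ancestor p st c q :
  wf_stack p st -> inl (c, q) \in st -> ~~ suffix (c :: q) p.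
Proof.
elim: st p => [|[[b q'] | a] st IH] p //=.
  case/and4P => /eqP -> _ _ V; rewrite inE => /orP[/eqP[_ ->] | ].
    exact: nsuffix_long.
  exact: IH.
case/and3P => /eqP E N V H; rewrite E suffix_consr negb_or (IH _ V H) andbT.
by apply: contraNneq N => -[<- <-].
Qed.

Lemma wf_children_cat v cs st :
  uniq cs -> all (adjoinable v) cs -> (forall c, inl (c, v) \notin st) -> wf_stack v st ->
  wf_stack v ([seq inl (c, v) | c <- cs] ++ st).
Proof.
elim: cs => [|c cs IH] //= /andP[nc U] /andP[Ac A] N V.
rewrite eqxx Ac IH // andbT mem_cat negb_or N andbT.
by apply/mapP => -[c' Hc' [E]]; move: nc; rewrite E Hc'.
Qed.

Lemma wf_explore p b q st : wf_stack p (inl (b, q) :: st) ->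
  wf_stack (b :: q) (children (b :: q) ++ inr b :: st).
Proof.
case/and4P => /eqP -> Ab N V; apply: wf_children_cat.
- exact/filter_uniq/enum_uniq.
- exact: filter_all.
- move=> c; rewrite inE negb_or /=; apply/negP => /(wf_explored_suffix V).
  by apply/negP; apply: nsuffix_long.
- by rewrite /= eqxx N.
Qed.

Definition reachable (p : W) (st : seq task) (z : W) : bool :=
  suffix z p || has (fun w => suffix w z) (frontier st).

Lemma child_unreachable p b st :
  wf_stack p st -> inl (b, p) \notin st -> ~~ reachable p st (b :: p).
Proof.
move=> V N; rewrite /reachable negb_or nsuffix_long //=.
apply/hasPn => _ /frontierP[c [q [-> Hin]]]; rewrite suffix_consr negb_or.
rewrite (wf_explored_not_ancestor V Hin) andbT.
by apply: contraNneq N => -[<- <-].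
Qed.

Lemma redacc_traversal k st p x :
  wf_stack p st -> x \in traversals k st -> redacc p x = [::].
Proof.
move=> V Hx; move: k st x Hx p V; apply: traversals_ind.
- by move=> p /eqP ->.
- by move=> k b q st x _ IH p /and4P[_ _ _ /IH].
- move=> k b q st y _ IH p V; case/and4P: (V) => /eqP Eq Ab _ _; subst q.
  by rewrite redacc_cons red_step_adjoinable //; apply: IH; apply: wf_explore V.
- move=> k a st y _ IH [|b p] // /and3P[/eqP[->] _ V].
  by rewrite redacc_cons red_step_linv IH.
Qed.

Lemma count_children_returns v : count (predC explores) (children v) = 0.
Proof.
by rewrite count_map; apply/eqP; rewrite -leqn0 leqNgt -has_count; apply/hasP => -[].
Qed.

Lemma count_returns_inl x st :
  count (predC explores) (inl x :: st) = count (predC explores) st.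
Proof. by []. Qed.

Lemma count_returns_inr a st :
  count (predC explores) (inr a :: st) = (count (predC explores) st).+1.
Proof. by []. Qed.

Lemma size_traversal k st x :
  x \in traversals k st -> size x = (2 * k + count (predC explores) st).
Proof.
move: k st x; apply: traversals_ind => // [k b q st y _ Hy | k a st y _ Hy].
  rewrite [size _]/= Hy count_cat count_children_returns.
  by rewrite count_returns_inr count_returns_inl; lia.
by rewrite [size _]/= Hy count_returns_inr addnS.
Qed.

Lemma traversal_reachable k st p x z :
  wf_stack p st -> x \in traversals k st -> z \in walk p x -> reachable p st z.
Proof.
move=> V Hx; move: k st x Hx p V z; apply: traversals_ind.
- by move=> p /eqP -> z; rewrite inE => /eqP ->; rewrite /reachable suffix_refl.
- move=> k b q st x _ IH p /and4P[_ _ _ /IH R] z /R.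
  by rewrite /reachable /= => /orP[-> | ->]; rewrite ?orbT.
- move=> k b q st y _ IH p V; case/and4P: (V) => /eqP Eq Ab _ _; subst q.
  move=> z; rewrite walk_cons red_step_adjoinable // inE => /orP[/eqP -> | ].
    by rewrite /reachable suffix_refl.
  move=> /(IH _ (wf_explore V)); rewrite /reachable frontier_cat has_cat /= suffix_consr.
  case/orP => [/orP[/eqP -> | ->] | /orP[/hasP[w /frontier_childrenP[c -> _] Hw] | ->]].
  + by rewrite suffix_refl orbT.
  + by [].
  + by rewrite (suffix_trans (suffix_cons _ _) Hw) orbT.
  + by rewrite !orbT.
- move=> k a st y _ IH [|b p] // /and3P[/eqP[->] _ /IH R] z.
  rewrite walk_cons red_step_linv inE => /orP[/eqP -> | /R].
    by rewrite /reachable suffix_refl.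
  by rewrite /reachable suffix_consr => /orP[-> | ->]; rewrite ?orbT.
Qed.

Lemma traversal_ancestor k st p x z :
  wf_stack p st -> x \in traversals k st -> suffix z p -> z \in walk p x.
Proof.
move=> V Hx; move: k st x Hx p V z; apply: traversals_ind.
- by move=> p /eqP -> z; rewrite suffixs0 inE.
- by move=> k b q st x _ IH p /and4P[_ _ _ /IH].
- move=> k b q st y _ IH p V; case/and4P: (V) => /eqP Eq Ab _ _; subst q.
  move=> z Hz; rewrite walk_cons red_step_adjoinable // inE.
  by rewrite (IH _ (wf_explore V)) ?orbT // (suffix_trans Hz) ?suffix_cons.
- move=> k a st y _ IH [|b p] // /and3P[/eqP[->] _ /IH P] z.
  by rewrite walk_cons red_step_linv inE suffix_consr => /orP[-> | /P ->]; rewrite ?orbT.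
Qed.

Lemma explore_fresh k p b q st x :
  wf_stack p (inl (b, q) :: st) -> x \in traversals k st -> b :: p \notin walk p x.
Proof.
case/and4P => /eqP -> _ N V Hx.
by apply: contra (child_unreachable V N); apply: traversal_reachable Hx.
Qed.

Lemma return_fresh k p a st y :
  wf_stack (a :: p) (inr a :: st) -> y \in traversals k st -> a :: p \notin walk p y.
Proof.
case/and3P => _ N V Hy.
by apply: contra (child_unreachable V N); apply: traversal_reachable Hy.
Qed.

Lemma traversal_nverts k st p x :
  wf_stack p st -> x \in traversals k st -> size (undup (walk p x)) = (size p + k).+1.
Proof.
move=> V Hx; move: k st x Hx p V; apply: traversals_ind.
- by move=> p /eqP ->.
- by move=> k b q st x _ IH p /and4P[_ _ _ /IH].
- move=> k b q st y Hy IH p V; case/and4P: (V) => /eqP Eq Ab _ _; subst q.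
  have V' := wf_explore V.
  rewrite walk_cons red_step_adjoinable //= (traversal_ancestor V' Hy) ?suffix_cons //.
  by rewrite IH //= addnS.
- move=> k a st y Hy IH [|b p] // V; case/and3P: (V) => /eqP[Eb] _ V'; subst b.
  by rewrite walk_cons red_step_linv /= (negbTE (return_fresh V Hy)) /= IH.
Qed.

Lemma mem_walk_explored p b (y : W) : adjoinable p b -> b :: p \in walk p (b :: y).
Proof. by move=> Ab; rewrite walk_cons red_step_adjoinable // inE mem_walk_head orbT. Qed.

Lemma traversal_inj k st p x1 x2 :
  wf_stack p st -> x1 \in traversals k st -> x2 \in traversals k st ->
  walk p x1 =i walk p x2 -> x1 = x2.
Proof.
move=> V Hx1; move: k st x1 Hx1 p x2 V; apply: traversals_ind.
- by move=> p x2 _; rewrite inE => /eqP ->.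
- move=> k b q st x1 Hx1 IH p x2 V; rewrite traversals_explore mem_cat.
  case/orP => [Hx2 | ]; first by case/and4P: V => _ _ _ /IH; apply.
  case: k Hx1 IH => // k Hx1 _ /mapP[y2 _ ->] E.
  case/and4P: (V) => /eqP Eq Ab _ _; subst q.
  by have := explore_fresh V Hx1; rewrite E mem_walk_explored.
- move=> k b q st y1 Hy1 IH p x2 V; case/and4P: (V) => /eqP Eq Ab _ _; subst q.
  rewrite traversals_explore mem_cat => /orP[Hx2 E | /mapP[y2 Hy2 ->]].
    by have := explore_fresh V Hx2; rewrite -E mem_walk_explored.
  rewrite !walk_cons red_step_adjoinable // => E; congr cons.
  have V' := wf_explore V.
  apply: (IH _ _ V' Hy2); apply: eq_mem_cons E _.
  by rewrite (traversal_ancestor V' Hy1) ?(traversal_ancestor V' Hy2) ?suffix_cons.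
- move=> k a st y1 Hy1 IH [|b p] // x2 V; case/and3P: (V) => /eqP[Eb] _ V'; subst b.
  rewrite traversals_return => /mapP[y2 Hy2 ->]; rewrite !walk_cons red_step_linv => E.
  congr cons; apply: (IH _ _ V' Hy2); apply: eq_mem_cons E _.
  by rewrite (negbTE (return_fresh V Hy1)) (negbTE (return_fresh V Hy2)).
Qed.

Lemma traversals_uniq k st p : wf_stack p st -> uniq (traversals k st).
Proof.
elim/ltn_ind: k st p => k IHk st; elim: st => [|[[b q] | a] st IHst] p.
- by rewrite traversals_nil; case: k {IHk}.
- move=> V; case/and4P: (V) => /eqP Eq Ab _ V0; subst q.
  rewrite traversals_explore cat_uniq (IHst _ V0).
  case: k IHk IHst => [|k] IHk _; first by rewrite andbT.
  rewrite map_inj_uniq ?(IHk k (ltnSn k) _ _ (wf_explore V)) ?andbT; last by move=> ? ? [].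
  apply/hasP => -[_ /mapP[y _ ->] Hx].
  by have := explore_fresh V Hx; rewrite mem_walk_explored.
- case: p => [|b p] // V; case/and3P: (V) => /eqP[Eb] _ V'; subst b.
  by rewrite traversals_return map_inj_uniq ?(IHst _ V') // => ? ? [].
Qed.

Lemma reduced_suffix (s u : W) : reduced u -> suffix s u -> reduced s.
Proof. by move=> ru /suffixP[t E]; subst u; elim: t ru => //= c t IH /andP[_ /IH]. Qed.

(* The vertices that a traversal of [st] still has to visit. *)
Definition pending (st : seq task) (D : seq W) : Prop :=
  {in D, forall u, [&& reduced u, (u \in frontier st) || (behead u \in D)
                    & has (fun w => suffix w u) (frontier st)]}.

Lemma pending_no_descendant p b st D u :
  wf_stack p (inl (b, p) :: st) -> b :: p \notin D -> pending (inl (b, p) :: st) D ->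
  u \in D -> ~~ suffix (b :: p) u.
Proof.
case/and4P => _ _ _ V nD PD.
elim: {u}(size u) {-2}u (leqnn (size u)) => [|n IH] u Hs Hu; apply/negP => Hsuf.
  by move: (size_suffix Hsuf) Hs => /=; case: (size u).
have Hne : u != b :: p by apply: contraNneq nD => <-.
case/and3P: (PD u Hu) => _ /orP[Hf | Hb] _.
  move: Hf; rewrite frontier_inl inE (negbTE Hne) => /frontierP[c [q [Eu Hin]]].
  move: Hne; rewrite (suffix_size_eq Hsuf) ?eqxx // Eu /= ltnS.
  exact/size_suffix/(wf_explored_suffix V Hin).
have Hsb : size (behead u) <= n by rewrite size_behead; move: Hs; case: (size u).
by move: (IH _ Hsb Hb); rewrite suffix_behead.
Qed.

Lemma pending_skip p b st D :
  wf_stack p (inl (b, p) :: st) -> b :: p \notin D ->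
  pending (inl (b, p) :: st) D -> pending st D.
Proof.
move=> V nD PD u Hu; case/and3P: (PD u Hu) => -> Hcl Hroot.
have Hne : (u == b :: p) = false by apply: contraNF nD => /eqP <-.
rewrite frontier_inl inE Hne /= in Hcl Hroot; rewrite Hcl /=.
by move: Hroot; rewrite (negbTE (pending_no_descendant V nD PD Hu)).
Qed.

Lemma pending_explore p b st D :
  wf_stack p (inl (b, p) :: st) -> pending (inl (b, p) :: st) D ->
  pending (children (b :: p) ++ inr b :: st) [seq u <- D | u != b :: p].
Proof.
move=> V PD u; rewrite mem_filter => /andP[nu Hu].
case/and3P: (PD u Hu) => Ru Hcl Hroot; rewrite frontier_cat frontier_inr mem_cat has_cat.
rewrite frontier_inl inE (negbTE nu) /= in Hcl Hroot; apply/and3P; split=> //.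
  case/orP: Hcl => [-> | Hb]; first by rewrite orbT.
  rewrite mem_filter Hb andbT.
  have [Eb | _] := eqVneq (behead u) (b :: p); last by apply/orP; right.
  case: u nu Hu Ru Eb {Hb Hroot} => [|c u] //= _ _ /andP[Hc _] Eb; subst u.
  by apply/orP; left; apply/orP; left; apply/frontier_childrenP; exists c.
case/orP: Hroot => [Hs | ->]; last by rewrite orbT.
have [c Hc] := suffix_child Hs nu.
apply/orP; left; apply/hasP; exists (c :: b :: p) => //.
apply/frontier_childrenP; exists c => //.
by have /andP[] := reduced_suffix Ru Hc.
Qed.

Lemma traversal_of_pending k st p D :
  wf_stack p st -> uniq D -> size D = k -> pending st D ->
  exists2 x, x \in traversals k st & forall z, (z \in walk p x) = suffix z p || (z \in D).
Proof.
elim/ltn_ind: k st p D => k IHk st; elim: st => [|[[b q] | a] st IHst] p D.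
- move=> /eqP -> _; case: D => [<- _ | u D _ PD]; last first.
    by have := PD u (mem_head u D); rewrite /frontier /= !andbF.
  by exists [::]; rewrite ?inE // => z; rewrite inE suffixs0 orbF.
- move=> V; case/and4P: (V) => /eqP Eq Ab _ V0; subst q => UD SD PD.
  case: (boolP (b :: p \in D)) => HbD; last first.
    have [x Hx Ex] := IHst p D V0 UD SD (pending_skip V HbD PD).
    by exists x; rewrite // traversals_explore mem_cat Hx.
  case: k IHk IHst SD => [|k] IHk _ SD; first by case: D SD HbD {UD PD}.
  have SD' : size [seq u <- D | u != b :: p] = k.
    have := count_predC (pred1 (b :: p)) D; rewrite count_uniq_mem // HbD SD.
    by rewrite size_filter => /eqP; rewrite eqSS => /eqP <-.
  have [y Hy Ey] := IHk k (ltnSn k) _ _ _ (wf_explore V) (filter_uniq _ UD) SD'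
    (pending_explore V PD).
  exists (b :: y); first by rewrite traversals_explore mem_cat map_f ?orbT.
  move=> z; rewrite walk_cons red_step_adjoinable // inE Ey suffix_consr mem_filter.
  case: (eqVneq z p) => [-> | _]; first by rewrite suffix_refl.
  by case: (eqVneq z (b :: p)) => [-> | _]; rewrite ?HbD ?orbT.
- case: p => [|b p] // V UD SD PD; case/and3P: (V) => /eqP[Eb] _ V'; subst b.
  have [y Hy Ey] := IHst p D V' UD SD PD.
  exists (linv a :: y); first by rewrite traversals_return map_f.
  by move=> z; rewrite walk_cons red_step_linv inE Ey suffix_consr orbA.
Qed.

End Traversals.

(** * Counting idempotents *)

Section IdempotentCount.
Variable r : nat.
Local Notation W := (word r).

Lemma classes_sub (l : seq W) : {subset classes l <= l}.
Proof.
elim: l => //= w l IH u; case: ifP => _; first by move/IH; rewrite inE => ->; rewrite orbT.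
by rewrite !inE => /orP[-> | /IH ->]; rewrite ?orbT.
Qed.

Lemma classes_uniq (l : seq W) : uniq (classes l).
Proof.
elim: l => //= w l IH; case: ifP => // /negbT/hasPn Hh /=; rewrite IH andbT.
by apply: contraTN (sameM_refl w) => /Hh.
Qed.

Lemma classes_sameM_eq (l : seq W) : {in classes l &, forall a b, sameM a b -> a = b}.
Proof.
elim: l => //= w l IH; case: ifP => // /negbT/hasPn Hh a b; rewrite !inE.
case/orP => [/eqP -> | Ha]; case/orP => [/eqP -> | Hb] // Hs.
- by move: (Hh b Hb); rewrite Hs.
- by move: (Hh a Ha); rewrite sameM_sym Hs.
- exact: IH.
Qed.

Lemma classes_cover (l : seq W) u : u \in l -> has (sameM u) (classes l).
Proof.
elim: l => //= w l IH; rewrite inE => /orP[/eqP -> | /IH Hu]; case: ifP => // _.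
- by rewrite /= sameM_refl.
- by rewrite /= Hu orbT.
Qed.

Definition root_tasks : seq (task r) := children [::].

Lemma wf_root_tasks : wf_stack [::] root_tasks.
Proof.
rewrite -[root_tasks]cats0; apply: wf_children_cat => //.
- exact/filter_uniq/enum_uniq.
- exact: filter_all.
Qed.

Lemma count_root_tasks : count (@explores r) root_tasks = (2 * r).
Proof.
rewrite count_children size_map size_filter (eq_count (a2 := predT)) //.
by rewrite count_predT -cardE card_letter.
Qed.

Lemma traversal_idempotent k (x : W) : x \in traversals k root_tasks ->
  [/\ red x = [::], size x = (2 * k) & nverts x = k.+1].
Proof.
move=> Hx; split; first exact: redacc_traversal wf_root_tasks Hx.
  by rewrite (size_traversal Hx) count_children_returns addn0.
by rewrite /nverts vertsE (traversal_nverts wf_root_tasks Hx).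
Qed.

Lemma idempotent_traversal (w : W) : red w = [::] ->
  exists2 x, x \in traversals (nverts w).-1 root_tasks & sameM x w.
Proof.
move=> Ew; set S := undup (verts w); set D := [seq u <- S | u != [::]].
have HS : [::] \in S by rewrite mem_undup mem_verts_nil.
have SD : size D = (size S).-1.
  rewrite size_filter; have := count_predC (pred1 [::]) S.
  by rewrite count_uniq_mem ?undup_uniq // HS => <-.
have PD : pending root_tasks D.
  move=> u; rewrite mem_filter mem_undup => /andP[nu Hu]; apply/and3P; split.
  - by move: Hu; rewrite vertsE; apply: reduced_walk.
  - have Hb : behead u \in verts w by move: Hu; rewrite !vertsE; apply: walk_nil_parent.
    case: (eqVneq (behead u) [::]) => [| nb]; last by rewrite mem_filter nb mem_undup Hb orbT.
    case: u nu {Hu Hb} => [|c u] //= _ ->.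
    by apply/orP; left; apply/frontier_childrenP; exists c.
  - case/lastP: u nu {Hu} => [|u c] // _; apply/hasP; exists [:: c].
      by apply/frontier_childrenP; exists c.
    by rewrite -cats1 suffix_suffix.
have [x Hx Ex] := traversal_of_pending wf_root_tasks (filter_uniq _ (undup_uniq _)) SD PD.
exists x => //; apply/sameMP; split; first by rewrite Ew; case: (traversal_idempotent Hx).
move=> z; rewrite !vertsE Ex suffixs0 mem_filter mem_undup -vertsE.
by case: (eqVneq z [::]) => [-> | _]; rewrite ?mem_verts_nil.
Qed.

Lemma elen_idempotent (w : W) : red w = [::] -> elen w = (2 * (nverts w).-1).
Proof.
move=> Ew; have [x Hx Sxw] := idempotent_traversal Ew; have /sameMP[_ Ev] := Sxw.
have [_ Sx Vx] := traversal_idempotent Hx.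
rewrite /elen; case: ex_minnP => n /existsP[t /sameMP[Er Et]] Hmin.
apply/eqP; rewrite eqn_leq; apply/andP; split.
  by apply: Hmin; apply/existsP; exists (Tuple (introT eqP Sx)).
have := nverts_le (tval t); rewrite Er Ew size_tuple /nverts.
by rewrite (size_undup_eq Et) -(size_undup_eq Ev) -/(nverts x) Vx /=; lia.
Qed.

Lemma SE_odd k : SE r (2 * k).+1 = 0.
Proof.
rewrite /SE; case E : (enum _) => [|t l] //.
have : t \in enum [pred t : (2 * k).+1.-tuple (letter r) |
                   idemw (tval t) && (elen (tval t) == (2 * k).+1)] by rewrite E mem_head.
by rewrite mem_enum => /andP[]; rewrite idemwE => /eqP /elen_idempotent -> /eqP; lia.
Qed.

Lemma SE_even k : SE r (2 * k) = size (traversals k root_tasks).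
Proof.
rewrite /SE; set l := map _ _.
have Hl u : u \in l -> red u = [::] /\ nverts u = k.+1.
  case/mapP => t; rewrite mem_enum => /andP[]; rewrite idemwE => /eqP Er /eqP.
  rewrite elen_idempotent // => Ee ->; split=> //.
  by rewrite -(prednK (nverts_gt0 t)); move: Ee; set n := _.-1; lia.
have Uc := classes_uniq l; have Ut := traversals_uniq k wf_root_tasks.
apply/eqP; rewrite eqn_leq; apply/andP; split.
  apply: (size_transversal_le (@sameM_sym r) (@sameM_trans r) Uc (@classes_sameM_eq l)).
  move=> a /classes_sub /Hl[Er Ea]; have [x] := idempotent_traversal Er; rewrite Ea => Hx Sx.
  by apply/hasP; exists x; rewrite // sameM_sym.
apply: (size_transversal_le (@sameM_sym r) (@sameM_trans r) Ut).
  move=> a b Ha Hb /sameMP[_ Ev]; apply: traversal_inj wf_root_tasks Ha Hb _ => z.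
  by rewrite -!vertsE.
move=> b Hb; apply: classes_cover; have [Er Sb Vb] := traversal_idempotent Hb.
apply/mapP; exists (Tuple (introT eqP Sb)) => //.
by rewrite mem_enum; apply/andP; rewrite idemwE Er elen_idempotent // Vb.
Qed.

Lemma SE_raney k : SE r (2 * k) = raney (2 * r - 1) k (2 * r).
Proof. by rewrite SE_even size_traversals count_root_tasks. Qed.

End IdempotentCount.

(** * Asymptotics *)

Lemma leq_bin_mid n i : 2 * i < n -> 'C(n, i) <= 'C(n, i.+1).
Proof.
move=> H; rewrite -(leq_pmul2l (ltn0Sn i)) mul_bin_left.
by rewrite leq_mul2r; apply/orP; right; lia.
Qed.

Section BinomialMode.
Variables m j : nat.
Hypothesis m2 : 2 <= m.
Let n := m * j.
(* The terms of m ^ n = ((m - 1) + 1) ^ n; the largest one is the j-th. *)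
Let term i := 'C(n, i) * (m - 1) ^ (n - i).

Lemma term_succ i : i < n -> term i.+1 * (i.+1 * (m - 1)) = term i * (n - i).
Proof.
move=> Hi; rewrite /term.
have -> : (m - 1) ^ (n - i) = (m - 1) ^ (n - i.+1) * (m - 1) by rewrite -expnSr; congr expn; lia.
set X := _ ^ _; transitivity (i.+1 * 'C(n, i.+1) * (X * (m - 1))); first by ring.
by rewrite mul_bin_left; ring.
Qed.

Lemma term_le_mode i : i <= n -> term i <= term j.
Proof.
have pos a : 0 < a.+1 * (m - 1) by rewrite muln_gt0 /=; lia.
have jn : j <= n by rewrite /n; nia.
move=> Hin; case: (leqP i j) => Hij.
  have up : {in [pred a | a <= j] &, {homo term : a b / a <= b}}.
    apply: homo_leq_in => [// | ? ? ? | a b _ Hb c /andP[_ /ltnW Hcb] | a _ Ha].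
    - exact: leq_trans.
    - exact: leq_trans Hcb Hb.
    - rewrite inE /= in Ha; rewrite -(leq_pmul2r (pos a)) term_succ; last by rewrite /n; nia.
      by rewrite leq_mul2l; apply/orP; right; rewrite /n; nia.
  by apply: up; rewrite ?inE.
have down : {in [pred a | j <= a <= n] &, {homo term : a b / a <= b >-> b <= a}}.
  apply: (@homo_leq_in _ _ _ (fun x y => y <= x)) => [// | y x z Hyx Hzy | a b | a].
  - exact: leq_trans Hzy Hyx.
  - move=> /andP[Ha _] /andP[_ Hb] c /andP[Hac Hcb].
    by rewrite inE /= (leq_trans Ha (ltnW Hac)) (leq_trans (ltnW Hcb) Hb).
  - move=> /andP[Ha _] /andP[_ Han]; rewrite -(leq_pmul2r (pos a)) term_succ //.
    by rewrite leq_mul2l; apply/orP; right; rewrite /n; nia.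
by apply: down; rewrite ?inE /= ?leqnn ?(ltnW Hij) ?Hin ?jn.
Qed.

Lemma expn_sum_terms : m ^ n = \sum_(i < n.+1) term i.
Proof.
have -> : m ^ n = (m - 1 + 1) ^ n by rewrite subnK // ltnW.
rewrite expnDn.
by apply: eq_bigr => i _; rewrite exp1n muln1.
Qed.

Lemma mode_term_le : 'C(m * j, j) * (m - 1) ^ ((m - 1) * j) <= m ^ (m * j).
Proof.
have -> : (m - 1) * j = n - j by rewrite /n mulnBl mul1n.
rewrite -/n -/(term j) expn_sum_terms.
have Hj : j < n.+1 by rewrite ltnS /n; nia.
by rewrite (bigD1 (Ordinal Hj)) //= leq_addr.
Qed.

Lemma mode_term_ge : m ^ (m * j) <= (m * j).+1 * ('C(m * j, j) * (m - 1) ^ ((m - 1) * j)).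
Proof.
have -> : (m - 1) * j = n - j by rewrite /n mulnBl mul1n.
rewrite -/n -/(term j) expn_sum_terms.
apply: (@leq_trans (\sum_(i < n.+1) term j)); last by rewrite sum_nat_const card_ord.
by apply: leq_sum => i _; apply: term_le_mode; rewrite -ltnS.
Qed.

End BinomialMode.

Lemma raney_ub m k : 2 <= m ->
  raney m k m.+1 * (m - 1) ^ ((m - 1) * k.+2) <= m ^ (m * k.+2).
Proof.
move=> m2; apply: leq_trans (mode_term_le k.+2 m2); rewrite leq_mul2r; apply/orP; right.
have H1 : raney m k m.+1 <= 'C(m.+1 + m * k, k).
  rewrite -(leq_pmul2r (_ : 0 < m.+1 + m * k)) // raney_ballot ?(ltnW m2) //.
  by rewrite mulnC leq_mul2l leq_addr orbT.
apply: (leq_trans H1); apply: (@leq_trans 'C(m * k.+2, k)); first by apply: leq_bin2l; nia.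
by apply: leq_trans (leq_bin_mid _) (leq_bin_mid _); nia.
Qed.

Lemma raney_lb m k : 2 <= m ->
  m ^ (m * k) <= (m * k).+1 * ((m.+1 + m * k) * raney m k m.+1 * (m - 1) ^ ((m - 1) * k)).
Proof.
move=> m2; apply: leq_trans (mode_term_ge k m2) _.
rewrite leq_mul2l leq_mul2r; apply/orP; right; apply/orP; right.
rewrite [_ * raney _ _ _]mulnC raney_ballot; last exact: ltnW.
by apply: leq_trans (leq_pmull _ (ltn0Sn m)); apply: leq_bin2l; apply: leq_addl.
Qed.

Local Open Scope classical_set_scope.
Local Open Scope ring_scope.

Section KthRoots.
Variable R : realType.

Lemma bernoulli2 (y : R) k : 0 <= y ->
  1 + k%:R * y + (k%:R * (k%:R - 1) / 2) * y ^+ 2 <= (1 + y) ^+ k.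
Proof.
move=> y0; elim: k => [|k IH]; first by rewrite !mul0r !addr0 expr0.
have hk : 0 <= k%:R * (k%:R - 1) :> R.
  by case: k {IH} => [|k]; rewrite ?mul0r // -natr1 addrK mulr_ge0.
rewrite -natr1; set L := 1 + _ + _ in IH.
apply: (@le_trans _ _ ((1 + y) * L)); last by rewrite exprS ler_wpM2l ?addr_ge0.
rewrite -subr_ge0.
have -> : (1 + y) * L - (1 + (k%:R + 1) * y + (k%:R + 1) * (k%:R + 1 - 1) / 2 * y ^+ 2)
  = (k%:R * (k%:R - 1) / 2) * y ^+ 3 by rewrite /L; field.
by rewrite mulr_ge0 ?exprn_ge0 ?divr_ge0.
Qed.

Lemma sqr_le_expr_eventually (B e : R) : 0 <= B -> 0 < e ->
  exists N, forall k, (N <= k)%N -> B * k%:R ^+ 2 <= (1 + e) ^+ (2 * k).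
Proof.
move=> B0 e0; set M := 4 * B / e ^+ 4 + 1.
exists (Num.truncn M).+2 => k Hk; set K : R := k%:R.
have HK : M <= K - 1.
  apply: le_trans (ltW (truncnS_gt M)) _; rewrite lerBrDr natr1 ler_nat; exact: Hk.
have e4 : 0 < e ^+ 4 by rewrite exprn_gt0.
have M1 : 4 * B / e ^+ 4 <= K - 1 - 1 by move: HK; rewrite /M; lra.
have K1 : 1 <= K - 1 by apply: le_trans HK; rewrite /M lerDr divr_ge0 ?mulr_ge0 // ltW.
have Hp : K * (K - 1) / 2 * e ^+ 2 <= (1 + e) ^+ k.
  apply: le_trans (bernoulli2 k (ltW e0)); have : 0 <= K * e by rewrite mulr_ge0 // ltW.
  rewrite /K; lra.
have Hp0 : 0 <= K * (K - 1) / 2 * e ^+ 2.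
  by rewrite mulr_ge0 ?divr_ge0 ?mulr_ge0 ?exprn_ge0 // ?ltW //; lra.
have Hsq : (K * (K - 1) / 2 * e ^+ 2) ^+ 2 <= ((1 + e) ^+ k) ^+ 2.
  by rewrite ler_pXn2r // nnegrE //; apply: le_trans Hp.
rewrite mulnC exprM; apply: le_trans Hsq.
have -> : (K * (K - 1) / 2 * e ^+ 2) ^+ 2 = K ^+ 2 * ((K - 1) ^+ 2 * e ^+ 4 / 4) by field.
rewrite mulrC; apply: ler_wpM2l; first by rewrite exprn_ge0.
have {1}-> : B = 4 * B / e ^+ 4 * e ^+ 4 / 4 by field; rewrite gt_eqF.
rewrite ler_pM2r ?invr_gt0 // ler_pM2r //.
by apply: le_trans (_ : K - 1 <= _); [lra | rewrite expr2 ler_peMr //; lra].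
Qed.

Lemma expr_powRV (b : R) n : 0 <= b -> (0 < n)%N -> (b ^+ n) `^ (n%:R^-1) = b.
Proof.
move=> b0 n0; rewrite -powR_mulrn // -powRrM mulfV ?powRr1 //.
by rewrite pnatr_eq0 -lt0n.
Qed.

Lemma cvg_root_between (q : nat -> R) (B : R) : 0 <= B ->
  (forall k, (1 <= k)%N -> [/\ 0 < q k, q k <= B * k%:R ^+ 2 & (q k)^-1 <= B * k%:R ^+ 2]) ->
  (fun k => q k `^ ((2 * k)%:R^-1)) @ \oo --> (1 : R).
Proof.
move=> B0 Hq; apply/cvgrPdist_le => e e0.
have [N HN] := sqr_le_expr_eventually B0 e0.
exists (maxn N 1) => // k /=; rewrite geq_max => /andP[/HN HNk k1].
have [q0 Hu Hl] := Hq k k1; have k2 : (0 < 2 * k)%N by rewrite muln_gt0.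
have e1 : 0 <= 1 + e by lra.
have ie0 : 0 < (1 + e)^-1 by rewrite invr_gt0; lra.
set x := q k `^ _.
have Hx1 : x <= 1 + e.
  rewrite -(expr_powRV e1 k2); apply: ge0_ler_powR; rewrite ?nnegrE ?invr_ge0 ?exprn_ge0 //.
    exact: ltW.
  exact: le_trans Hu HNk.
have Hx2 : (1 + e)^-1 <= x.
  rewrite -(expr_powRV (ltW ie0) k2); apply: ge0_ler_powR.
  - by rewrite invr_ge0.
  - by rewrite nnegrE exprn_ge0 // ltW.
  - by rewrite nnegrE ltW.
  rewrite exprVn -(invrK (q k)) lef_pV2 ?posrE ?exprn_gt0 ?invr_gt0 //; last by lra.
  exact: le_trans Hl HNk.
have : 1 - e <= (1 + e)^-1.
  by rewrite -[leRHS]mul1r ler_pdivlMr; [nra | lra].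
by rewrite ler_norml => ?; apply/andP; split; lra.
Qed.

End KthRoots.

Section GrowthRate.
Variable R : realType.

Definition growth (r : nat) : R :=
  ((2 * r - 1)%N%:R / (2 * r - 2)%N%:R) ^+ (r - 1) * Num.sqrt (2 * r - 1)%N%:R.

(* [raney m k m.+1] grows like [raney_rate m ^+ k]. *)
Definition raney_rate (m : nat) : R := m%:R ^+ m / (m - 1)%N%:R ^+ (m - 1).

Lemma raney_rate_gt0 m : (2 <= m)%N -> 0 < raney_rate m.
Proof. by move=> m2; rewrite divr_gt0 // exprn_gt0 // ltr0n; lia. Qed.

Lemma growthE r : (2 <= r)%N -> growth r = Num.sqrt (raney_rate (2 * r - 1)).
Proof.
move=> r2; set m := (2 * r - 1)%N.
have Em : (2 * r - 2 = m - 1)%N by rewrite /m; lia.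
have Er : (m - 1 = 2 * (r - 1))%N by rewrite /m; lia.
have m1 : 0 < (m - 1)%N%:R :> R by rewrite ltr0n; lia.
have G0 : 0 <= growth r by rewrite mulr_ge0 ?sqrtr_ge0 // exprn_ge0 // divr_ge0.
rewrite -[LHS]ger0_norm // -sqrtr_sqr; congr Num.sqrt.
rewrite /growth -/m Em exprMn sqr_sqrtr // -exprM mulnC -Er /raney_rate.
move: m1; have [n ->] : exists n, m = n.+1 by exists (m - 1)%N; rewrite /m; lia.
rewrite subn1 /= => m1; rewrite expr_div_n [_ ^+ n.+1]exprS; field.
by rewrite expf_neq0 // gt_eqF.
Qed.

Lemma raney_le_rate m k : (2 <= m)%N -> (raney m k m.+1)%:R <= raney_rate m ^+ k.+2 :> R.
Proof.
move=> m2; have D0 : 0 < (m - 1)%N%:R ^+ ((m - 1) * k.+2) :> R.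
  by rewrite exprn_gt0 // ltr0n; lia.
rewrite expr_div_n -!exprM ler_pdivlMr // -!natrX -natrM ler_nat.
exact: raney_ub.
Qed.

Lemma rate_le_raney m k : (2 <= m)%N ->
  raney_rate m ^+ k <= ((m * k).+1 * (m.+1 + m * k))%N%:R * (raney m k m.+1)%:R :> R.
Proof.
move=> m2; have D0 : 0 < (m - 1)%N%:R ^+ ((m - 1) * k) :> R.
  by rewrite exprn_gt0 // ltr0n; lia.
rewrite expr_div_n -!exprM ler_pdivrMr // -!natrX -!natrM ler_nat.
by apply: leq_trans (raney_lb k m2) _; rewrite !mulnA.
Qed.

Section RaneyRoot.
Variable m : nat.
Hypothesis m2 : (2 <= m)%N.
Let c := raney_rate m.
Let q k := (raney m k m.+1)%:R / c ^+ k.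
Let B := c ^+ 2 + (2 * m + 1)%N%:R ^+ 2.

Lemma raney_ratio_bounds k : (1 <= k)%N ->
  [/\ 0 < q k, q k <= B * k%:R ^+ 2 & (q k)^-1 <= B * k%:R ^+ 2].
Proof.
move=> k1; have c0 : 0 < c := raney_rate_gt0 m2.
have ck0 : 0 < c ^+ k by rewrite exprn_gt0.
have K1 : 1 <= k%:R ^+ 2 :> R by rewrite exprn_ege1 // ler1n.
have Hu := raney_le_rate k m2; have Hl := rate_le_raney k m2.
set a := (raney m k m.+1)%:R in Hu Hl *.
set P := ((m * k).+1 * (m.+1 + m * k))%N%:R in Hl.
have P0 : 0 < P by rewrite ltr0n muln_gt0.
have a0 : 0 < a.
  by rewrite lt0r ler0n andbT; apply: contraTneq Hl => ->; rewrite mulr0 -ltNge.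
have HP : P <= (2 * m + 1)%N%:R ^+ 2 * k%:R ^+ 2.
  by rewrite -exprMn -natrM -natrX ler_nat; nia.
split; first by rewrite divr_gt0.
  apply: (@le_trans _ _ (c ^+ 2)).
    by rewrite ler_pdivrMr // -exprD add2n.
  by apply: le_trans (ler_peMr _ _) => //; rewrite ?lerDl ?exprn_ge0 // addr_ge0 ?exprn_ge0 ?ltW.
rewrite invf_div ler_pdivrMr //; apply: le_trans Hl _; rewrite ler_pM2r //.
apply: le_trans HP _; rewrite ler_pM2r ?exprn_gt0 ?ltr0n //.
by rewrite lerDr exprn_ge0 // ltW.
Qed.

Lemma cvg_root_raney :
  (fun k => (raney m k m.+1)%:R `^ ((2 * k)%:R^-1)) @ \oo --> Num.sqrt c.
Proof.
have c0 : 0 < c := raney_rate_gt0 m2.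
have B0 : 0 <= B by rewrite addr_ge0 // exprn_ge0 // ltW.
have Hq := cvg_root_between B0 raney_ratio_bounds.
have : (fun k => Num.sqrt c * q k `^ ((2 * k)%:R^-1)) @ \oo --> Num.sqrt c * 1.
  by apply: cvgM; [exact: cvg_cst | exact: Hq].
rewrite mulr1; apply: cvg_trans; apply: near_eq_cvg; exists 1%N => // k /= k1.
have [q0 _ _] := raney_ratio_bounds k1.
have -> : (raney m k m.+1)%:R = c ^+ k * q k by rewrite /q mulrC divfK // gt_eqF ?exprn_gt0.
rewrite powRM ?exprn_ge0 ?ltW //; congr (_ * _).
by rewrite -[c in c ^+ k](sqr_sqrtr (ltW c0)) -exprM expr_powRV ?sqrtr_ge0 ?muln_gt0.
Qed.

End RaneyRoot.

Lemma cvg_root_SE_even r : (2 <= r)%N ->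
  (fun k => ((SE r (2 * k))%:R : R) `^ (((2 * k)%N%:R)^-1)) @ \oo --> growth r.
Proof.
move=> r2; rewrite growthE //; set m := (2 * r - 1)%N.
have m2 : (2 <= m)%N by rewrite /m; lia.
have Em : (2 * r = m.+1)%N by rewrite /m; lia.
apply: cvg_trans (cvg_root_raney m2); apply: near_eq_cvg; near=> k.
by rewrite SE_raney -/m Em.
Unshelve. all: by end_near.
Qed.

End GrowthRate.

Section Limsup.
Variable R : realType.

Lemma cvg_half (g : R^nat) (l : R) : g @ \oo --> l -> (fun K => g K./2) @ \oo --> l.
Proof.
move=> /cvgrPdist_le Hg; apply/cvgrPdist_le => e /Hg[N _ HN].
exists N.*2 => // K /= HK; apply: HN => /=.
by rewrite geq_half_double.
Qed.

Lemma limn_esup_even (g : R^nat) (u : (\bar R)^nat) (l : R) :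
  (forall k, u (2 * k)%N = (g k)%:E) -> (forall k, (u (2 * k).+1 <= (g k)%:E)%E) ->
  g @ \oo --> l -> limn_esup u = l%:E.
Proof.
move=> ueven uodd gl; set w := fun K => (g K./2)%:E.
have uw K : (u K <= w K)%E.
  rewrite /w -[in u K](odd_double_half K) -muln2 mulnC.
  by case: (odd K); rewrite ?add0n ?ueven // add1n.
have wl : w @ \oo --> l%:E by apply: cvg_EFin; [exists 0%N | exact: cvg_half].
have gel : (fun k => (g k)%:E) @ \oo --> l%:E by apply: cvg_EFin; [exists 0%N | ].
apply/eqP; rewrite eq_le limn_esup_lim; apply/andP; split.
  rewrite -(cvg_lim _ (cvg_esups wl)) //.
  apply: lee_lim; [exact: is_cvg_esups | exact: is_cvg_esups | ].
  apply: nearW => n; apply: ge_ereal_sup => _ [k /= nk <-].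
  by apply: le_trans (uw k) _; apply: ereal_sup_ubound; exists k.
rewrite -(cvg_lim _ gel) //.
apply: lee_lim; [by apply/cvg_ex; exists l%:E | exact: is_cvg_esups | ].
apply: nearW => n; rewrite -ueven; apply: ereal_sup_ubound; exists (2 * n)%N => //=; lia.
Qed.

End Limsup.

Section GrowthRatio.
Variable R : realType.

Lemma expr1Dinvn_bounds (n : nat) : (0 < n)%N ->
  expR 1 * n%:R / (n%:R + 1) <= ((n%:R + 1) / n%:R) ^+ n :> R /\
  ((n%:R + 1) / n%:R) ^+ n <= expR 1 :> R.
Proof.
move=> n0; set N : R := n%:R; have N0 : 0 < N by rewrite ltr0n.
have P0 : 0 < (N + 1) / N by rewrite divr_gt0 ?addr_gt0.
split; last first.
  have -> : (N + 1) / N = 1 + N^-1 by field; rewrite gt_eqF.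
  apply: le_trans (_ : expR (N^-1) ^+ n <= _).
    by rewrite ler_pXn2r ?nnegrE ?expR_ge0 ?expR_ge1Dx // addr_ge0 // invr_ge0 ltW.
  by rewrite -expRM_natr mulVf // gt_eqF.
have H1 : expR ((N + 1)^-1) <= (N + 1) / N.
  rewrite -[leRHS]invf_div -[leLHS]invrK -expRN.
  rewrite lef_pV2 ?posrE ?expR_gt0 ?divr_gt0 ?addr_gt0 //.
  have -> : N / (N + 1) = 1 + - (N + 1)^-1 by field; rewrite gt_eqF ?addr_gt0.
  exact: expR_ge1Dx.
have : expR 1 <= ((N + 1) / N) ^+ n.+1.
  apply: le_trans (_ : expR ((N + 1)^-1) ^+ n.+1 <= _).
    by rewrite -expRM_natr -natr1 -/N mulVf // gt_eqF ?addr_gt0.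
  by rewrite ler_pXn2r ?nnegrE ?expR_ge0 // ltW.
by rewrite exprSr -ler_pdivrMr // invf_div mulrA.
Qed.

Lemma growth_ratio_sqr r : (2 <= r)%N ->
  (growth R r / Num.sqrt (expR 1 * (2 * r - 1)%N%:R)) ^+ 2
  = (((2 * r - 2)%N%:R + 1) / (2 * r - 2)%N%:R) ^+ (2 * r - 2) / expR 1.
Proof.
move=> r2; set n := (2 * r - 2)%N; have Em : (2 * r - 1 = n.+1)%N by rewrite /n; lia.
have N0 : 0 < n%:R :> R by rewrite ltr0n /n; lia.
rewrite expr_div_n sqr_sqrtr ?mulr_ge0 ?expR_ge0 // growthE // Em sqr_sqrtr; last first.
  by apply/ltW/raney_rate_gt0; lia.
rewrite /raney_rate subn1 /= -natr1 expr_div_n exprS.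
field; rewrite ?gt_eqF ?exprn_gt0 ?expR_gt0 //; lra.
Qed.

Lemma cvg_growth_ratio :
  (fun r : nat => growth R r / Num.sqrt (expR 1 * (2 * r - 1)%N%:R)) @ \oo --> (1 : R).
Proof.
apply/cvgrPdist_le => e e0.
set T := Num.truncn e^-1; exists (maxn T 2).+1 => // r /= Hr.
have r2 : (2 <= r)%N by lia.
set n := (2 * r - 2)%N; have n0 : (0 < n)%N by rewrite /n; lia.
set N : R := n%:R; have N0 : 0 < N by rewrite ltr0n.
have [Xl Xu] := expr1Dinvn_bounds n0.
set t := _ / _; have := growth_ratio_sqr r2; rewrite -/t -/n -/N => Ht2.
have t0 : 0 <= t.
  by rewrite divr_ge0 ?sqrtr_ge0 // mulr_ge0 ?sqrtr_ge0 ?exprn_ge0 ?divr_ge0.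
have ee : 0 < expR 1 :> R := expR_gt0 1.
have t1 : t ^+ 2 <= 1 by rewrite Ht2 ler_pdivrMr // mul1r.
have t2 : N / (N + 1) <= t ^+ 2 by rewrite Ht2 ler_pdivlMr // mulrC mulrA.
have He : (N + 1)^-1 <= e.
  rewrite -[e]invrK lef_pV2 ?posrE ?invr_gt0 ?addr_gt0 //.
  apply/ltW/(lt_le_trans (truncnS_gt _)); rewrite -/T /N natr1 ler_nat /n; lia.
have Hfrac : 1 - N / (N + 1) = (N + 1)^-1 by field; rewrite gt_eqF ?addr_gt0.
(* For 0 <= t <= 1, |t - 1| <= 1 - t ^+ 2 <= (N + 1)^-1. *)
rewrite ler_norml; apply/andP; split; nra.
Qed.

End GrowthRatio.

Theorem mainTheorem6 (R : realType) :
  (forall r : nat, (2 <= r)%N ->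
     limn_esup (fun K : nat => (((SE r K)%:R : R) `^ (K%:R^-1))%:E)
       = ((((2 * r - 1)%N%:R / (2 * r - 2)%N%:R) ^+ (r - 1)
            * Num.sqrt (2 * r - 1)%N%:R : R))%:E
     /\
     (fun k : nat => ((SE r (2 * k))%:R : R) `^ (((2 * k)%N%:R)^-1))
       @ \oo --> (((2 * r - 1)%N%:R / (2 * r - 2)%N%:R) ^+ (r - 1)
                   * Num.sqrt (2 * r - 1)%N%:R : R))
  /\
  (fun r : nat =>
     (((2 * r - 1)%N%:R / (2 * r - 2)%N%:R) ^+ (r - 1)
        * Num.sqrt (2 * r - 1)%N%:R : R)
     / Num.sqrt (expR 1 * (2 * r - 1)%N%:R)) @ \oo --> (1 : R).
Proof.
split; last exact: cvg_growth_ratio.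
move=> r r2; have cvg_even := @cvg_root_SE_even R r r2; split=> //.
apply: (limn_esup_even _ _ cvg_even) => // k.
by rewrite SE_odd powR0 ?lee_fin ?powR_ge0 // invr_eq0 pnatr_eq0.
Qed.
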